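(* Let $(l,k,b)$ be a suspension triplet for $(X_A,\sigma_A)$. For every $(x,r)\in X^{\mathbb R}_{A,b}$ with $r\ge l(x)$ there exists $(z,s)\in X_A\times\mathbb R$ with $b(z)\le s<l(z)$ such that $(x,r)\sim_{l,k}(z,s)$.
   Context: Let $N>1$ and $A$ an irreducible $N\times N$ $\{0,1\}$-matrix which is not a permutation matrix. $X_A$ is the compact space of sequences $(x_n)_{n\in\mathbb N}$, $x_n\in\{1,\dots,N\}$, $A(x_n,x_{n+1})=1$, with $\sigma_A((x_n)_n)=(x_{n+1})_n$. $\mathbb Z_+$, $\mathbb R_+$ are nonnegative integers/reals. $H^A$ is the quotient of $C(X_A,\mathbb Z)$ by $\{u-u\circ\sigma_A\}$, $H^A_+$ the classes of $\mathbb Z_+$-valued continuous functions; $[f]\in H^A_+$ is an order unit if for every $[u]\in H^A$ some $n\in\mathbb N$ has $n[f]-[u]\in H^A_+$. A suspension triplet is $(l,k,b)$ with $l,k\in C(X_A,\mathbb R_+)$, $b\in C(X_A,\mathbb R)$ such that $c=l-k$ is integer-valued with $[c]$ an order unit, and $l-b$, $k-b\circ\sigma_A$ take values in $\mathbb Z_+$. $X^{\mathbb R}_{A,b}=\{(x,r)\in X_A\times\mathbb R: r\ge b(x)\}$, and $\sim_{l,k}$ is the equivalence relation on it generated by $(x,r)\sim_{l,k}(\sigma_A(x),r-c(x))$ whenever $r\ge l(x)$. *)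

From Stdlib Require Import Reals ZArith Arith List Relations.
Import ListNotations.
Open Scope R_scope.

(* Symbols are 0..N-1 (the paper uses 1..N); a sequence is a function nat -> nat.
   The {0,1}-matrix A is given by its boolean entries A i j (i,j < N). *)
Definition sq := nat -> nat.

Fixpoint mpow (N : nat) (A : nat -> nat -> bool) (m i j : nat) : nat :=
  match m with
  | O => if Nat.eqb i j then 1%nat else 0%nat
  | S m' => fold_right Nat.add 0%nat
              (map (fun t => (mpow N A m' i t * (if A t j then 1 else 0))%nat) (seq 0 N))
  end.

Definition irreducible (N : nat) (A : nat -> nat -> bool) : Prop :=
  forall i j, (i < N)%nat -> (j < N)%nat -> exists m, (1 <= m)%nat /\ (0 < mpow N A m i j)%nat.

Definition is_perm_matrix (N : nat) (A : nat -> nat -> bool) : Prop :=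
  (forall i, (i < N)%nat -> exists j, (j < N)%nat /\ A i j = true /\
       forall j', (j' < N)%nat -> A i j' = true -> j' = j) /\
  (forall j, (j < N)%nat -> exists i, (i < N)%nat /\ A i j = true /\
       forall i', (i' < N)%nat -> A i' j = true -> i' = i).

Definition in_XA (N : nat) (A : nat -> nat -> bool) (x : sq) : Prop :=
  forall n, (x n < N)%nat /\ A (x n) (x (S n)) = true.

Definition shift (x : sq) : sq := fun n => x (S n).

(* continuity on X_A (product topology = agreement on initial segments) *)
Definition contR (N : nat) (A : nat -> nat -> bool) (f : sq -> R) : Prop :=
  forall x, in_XA N A x -> forall eps, 0 < eps -> exists n, forall y, in_XA N A y ->
    (forall i, (i < n)%nat -> y i = x i) -> Rabs (f y - f x) < eps.

Definition contZ (N : nat) (A : nat -> nat -> bool) (f : sq -> Z) : Prop :=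
  forall x, in_XA N A x -> exists n, forall y, in_XA N A y ->
    (forall i, (i < n)%nat -> y i = x i) -> f y = f x.

Definition in_HAplus (N : nat) (A : nat -> nat -> bool) (f : sq -> Z) : Prop :=
  exists g h : sq -> Z, contZ N A g /\ contZ N A h /\
    forall x, in_XA N A x -> (0 <= g x)%Z /\ f x = (g x + h x - h (shift x))%Z.

Definition order_unit (N : nat) (A : nat -> nat -> bool) (c : sq -> Z) : Prop :=
  forall u : sq -> Z, contZ N A u ->
    exists n : nat, in_HAplus N A (fun x => (Z.of_nat n * c x - u x)%Z).

Definition suspension_triplet (N : nat) (A : nat -> nat -> bool)
    (l k b : sq -> R) (c : sq -> Z) : Prop :=
  contR N A l /\ contR N A k /\ contR N A b /\
  (forall x, in_XA N A x -> 0 <= l x /\ 0 <= k x) /\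
  (forall x, in_XA N A x -> IZR (c x) = l x - k x) /\
  order_unit N A c /\
  (forall x, in_XA N A x -> exists n : nat, l x - b x = INR n) /\
  (forall x, in_XA N A x -> exists n : nat, k x - b (shift x) = INR n).

Definition in_XRAb (N : nat) (A : nat -> nat -> bool) (b : sq -> R) (p : sq * R) : Prop :=
  in_XA N A (fst p) /\ b (fst p) <= snd p.

Definition sim_gen (N : nat) (A : nat -> nat -> bool) (l b : sq -> R) (c : sq -> Z)
    (p q : sq * R) : Prop :=
  in_XRAb N A b p /\ l (fst p) <= snd p /\
  q = (shift (fst p), snd p - IZR (c (fst p))).

Definition sim (N : nat) (A : nat -> nat -> bool) (l b : sq -> R) (c : sq -> Z) :
    relation (sq * R) :=
  clos_refl_sym_trans (sq * R) (sim_gen N A l b c).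

(* If the orbit of (x, r) under the generating move never dropped below the
   roof l, the Birkhoff sums of c along x would stay below r, since l >= 0.
   But [c] is an order unit: m c - 1 = g + h - h o sigma with g >= 0 and h
   continuous, hence bounded on the compact space X_A, so m times the n-th
   Birkhoff sum of c is at least n minus a constant. *)

From Pilot Require Import Defs.
From Stdlib Require Import Reals ZArith Relations.
From Stdlib Require Import Classical ClassicalEpsilon Lia Lra.
Open Scope R_scope.

Definition agree (n : nat) (p y : sq) : Prop := forall i, (i < n)%nat -> y i = p i.

Definition extend (p : sq) (n j : nat) : sq := fun i => if Nat.ltb i n then p i else j.

Section ContinuousIntegerBounded.
Variables (N : nat) (A : nat -> nat -> bool) (h : sq -> Z).

Definition unbounded_on_cylinder (n : nat) (p : sq) : Prop :=
  forall M, exists y, in_XA N A y /\ agree n p y /\ (M < h y)%Z.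

Lemma bounded_on_extensions (n : nat) (p : sq) :
  (forall j, (j < N)%nat -> ~ unbounded_on_cylinder (S n) (extend p n j)) ->
  forall K, (K <= N)%nat -> exists M, forall j, (j < K)%nat -> forall y,
    in_XA N A y -> agree (S n) (extend p n j) y -> (h y <= M)%Z.
Proof.
  intros Hbd K. induction K as [|K IH]; intros HK.
  - exists 0%Z. intros; lia.
  - destruct IH as [M1 HM1]; [lia|].
    destruct (not_all_ex_not _ _ (Hbd K ltac:(lia))) as [M2 HM2].
    exists (Z.max M1 M2). intros j Hj y Hy Hagree.
    destruct (Nat.eq_dec j K) as [->|Hne].
    + destruct (Z_le_gt_dec (h y) M2); [lia|].
      exfalso; apply HM2; exists y; split; [exact Hy | split; [exact Hagree | lia]].
    + specialize (HM1 j ltac:(lia) y Hy Hagree); lia.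
Qed.

Lemma unbounded_on_cylinder_extend n p :
  unbounded_on_cylinder n p ->
  exists j, (j < N)%nat /\ unbounded_on_cylinder (S n) (extend p n j).
Proof.
  intros Hub. apply NNPP; intro Hno.
  assert (Hbd : forall j, (j < N)%nat -> ~ unbounded_on_cylinder (S n) (extend p n j))
    by (intros j Hj Hj'; apply Hno; eauto).
  destruct (bounded_on_extensions n p Hbd N (le_n _)) as [M HM].
  destruct (Hub M) as [y [Hy [Hagree Hlt]]].
  assert (h y <= M)%Z; [|lia].
  apply (HM (y n) (proj1 (Hy n)) y Hy).
  intros i Hi. unfold extend. destruct (Nat.ltb_spec i n).
  - apply Hagree; auto.
  - f_equal; lia.
Qed.

Definition next_symbol (n : nat) (p : sq) : nat :=
  epsilon (inhabits 0%nat)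
    (fun j => (j < N)%nat /\ unbounded_on_cylinder (S n) (extend p n j)).

(* Koenig's lemma: a branch of nested cylinders on which h is unbounded. *)
Fixpoint branch (n : nat) : sq :=
  match n with
  | O => fun _ => 0%nat
  | S n' => extend (branch n') n' (next_symbol n' (branch n'))
  end.

Lemma branch_unbounded :
  unbounded_on_cylinder 0 (branch 0) -> forall n, unbounded_on_cylinder n (branch n).
Proof.
  intros H0 n. induction n as [|n IH]; auto. simpl.
  apply (epsilon_spec (inhabits 0%nat)
    (fun j => (j < N)%nat /\ unbounded_on_cylinder (S n) (extend (branch n) n j))).
  exact (unbounded_on_cylinder_extend n _ IH).
Qed.

Lemma branch_stable n m i : (i < n)%nat -> (n <= m)%nat -> branch m i = branch n i.
Proof.
  intros Hi Hm. induction Hm; auto.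
  simpl. unfold extend. destruct (Nat.ltb_spec i m); auto. lia.
Qed.

Lemma contZ_bounded_above : contZ N A h -> exists M, forall y, in_XA N A y -> (h y <= M)%Z.
Proof.
  intros Hh. apply NNPP; intro Hno.
  assert (Hub : forall n, unbounded_on_cylinder n (branch n)).
  { apply branch_unbounded. intro M. apply NNPP; intro Hm. apply Hno. exists M.
    intros y Hy. destruct (Z_le_gt_dec (h y) M); auto. exfalso; apply Hm.
    exists y; split; [exact Hy | split; [intros i Hi; lia | lia]]. }
  set (x := fun i => branch (S i) i).
  assert (Hagree : forall n, agree n (branch n) x)
    by (intros n i Hi; symmetry; apply branch_stable; lia).
  assert (Hx : in_XA N A x).
  { intro n. destruct (Hub (S (S n)) 0%Z) as [y [Hy [Hyn _]]].
    assert (E : forall i, (i < S (S n))%nat -> y i = x i)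
      by (intros i Hi; rewrite (Hyn i Hi); symmetry; apply Hagree; lia).
    rewrite <- (E n), <- (E (S n)) by lia. apply Hy. }
  destruct (Hh x Hx) as [n Hn].
  destruct (Hub n (h x)) as [y [Hy [Hyn Hlt]]].
  rewrite (Hn y Hy) in Hlt; [lia|].
  intros i Hi. rewrite (Hyn i Hi). symmetry. apply Hagree; auto.
Qed.

End ContinuousIntegerBounded.

Fixpoint iter_shift (n : nat) (x : sq) : sq :=
  match n with O => x | S n' => Defs.shift (iter_shift n' x) end.

Fixpoint birkhoff_sum (f : sq -> Z) (x : sq) (n : nat) : Z :=
  match n with O => 0%Z | S n' => (birkhoff_sum f x n' + f (iter_shift n' x))%Z end.

Lemma in_XA_iter_shift N A x n : in_XA N A x -> in_XA N A (iter_shift n x).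
Proof.
  intros Hx. induction n as [|n IH]; simpl; auto. intro i. apply (IH (S i)).
Qed.

Section BirkhoffSums.
Variables (N : nat) (A : nat -> nat -> bool) (x : sq).
Hypothesis Hx : in_XA N A x.

Lemma birkhoff_sum_nonneg g :
  (forall y, in_XA N A y -> (0 <= g y)%Z) -> forall n, (0 <= birkhoff_sum g x n)%Z.
Proof.
  intros Hg n. induction n as [|n IH]; simpl; [lia|].
  specialize (Hg _ (in_XA_iter_shift N A x n Hx)). lia.
Qed.

Lemma birkhoff_sum_cohomologous f g h :
  (forall y, in_XA N A y -> f y = (g y + h y - h (Defs.shift y))%Z) ->
  forall n, birkhoff_sum f x n = (birkhoff_sum g x n + h x - h (iter_shift n x))%Z.
Proof.
  intros Hfg n. induction n as [|n IH]; simpl; [lia|].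
  rewrite (Hfg _ (in_XA_iter_shift N A x n Hx)). lia.
Qed.

Lemma birkhoff_sum_affine (m : Z) c n :
  birkhoff_sum (fun y => m * c y - 1)%Z x n = (m * birkhoff_sum c x n - Z.of_nat n)%Z.
Proof. induction n as [|n IH]; simpl; lia. Qed.

Lemma order_unit_birkhoff_sum_unbounded c :
  order_unit N A c -> forall r, exists n, r < IZR (birkhoff_sum c x n).
Proof.
  intros Hc r.
  destruct (Hc (fun _ => 1%Z)) as [m [g [h [_ [Hh Hgh]]]]];
    [intros y _; exists 0%nat; auto|].
  destruct (contZ_bounded_above N A h Hh) as [M HM].
  assert (Hgrowth : forall n,
            (Z.of_nat n + h x - M <= Z.of_nat m * birkhoff_sum c x n)%Z).
  { intro n.
    pose proof (birkhoff_sum_cohomologous _ g h (fun y Hy => proj2 (Hgh y Hy)) n) as Hcoh.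
    rewrite birkhoff_sum_affine in Hcoh.
    pose proof (birkhoff_sum_nonneg g (fun y Hy => proj1 (Hgh y Hy)) n).
    pose proof (HM _ (in_XA_iter_shift N A x n Hx)). lia. }
  set (r' := Rmax r 0).
  destruct (INR_archimed 1 (INR m * r' + IZR M - IZR (h x)) ltac:(lra)) as [n Hn].
  exists n.
  specialize (Hgrowth n). apply IZR_le in Hgrowth.
  rewrite mult_IZR, !minus_IZR, plus_IZR, <- !INR_IZR_INZ in Hgrowth.
  assert (r <= r' /\ 0 <= r') as [Hr Hr'] by (split; [apply Rmax_l | apply Rmax_r]).
  pose proof (pos_INR m).
  destruct (Rle_lt_dec (IZR (birkhoff_sum c x n)) r') as [Hle|]; [|lra].
  assert (INR m * IZR (birkhoff_sum c x n) <= INR m * r')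
    by (apply Rmult_le_compat_l; auto).
  lra.
Qed.

End BirkhoffSums.

Section RoofOrbit.
Variables (N : nat) (A : nat -> nat -> bool) (l k b : sq -> R) (c : sq -> Z).
Hypothesis Hc : forall y, in_XA N A y -> IZR (c y) = l y - k y.
Hypothesis Hkb : forall y, in_XA N A y -> exists n : nat, k y - b (Defs.shift y) = INR n.

Lemma sim_gen_shift y s :
  in_XRAb N A b (y, s) -> l y <= s ->
  in_XRAb N A b (Defs.shift y, s - IZR (c y)) /\
  sim_gen N A l b c (y, s) (Defs.shift y, s - IZR (c y)).
Proof.
  intros [Hy Hbs] Hls. split; [split | split; [split; auto | split; auto]].
  - intro i. apply (Hy (S i)).
  - simpl. rewrite (Hc y Hy). destruct (Hkb y Hy) as [m Hm].
    pose proof (pos_INR m). lra.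
Qed.

Definition orbit_point (x : sq) (r : R) (n : nat) : sq * R :=
  (iter_shift n x, r - IZR (birkhoff_sum c x n)).

Lemma orbit_point_succ x r n :
  orbit_point x r (S n)
  = (Defs.shift (fst (orbit_point x r n)),
     snd (orbit_point x r n) - IZR (c (fst (orbit_point x r n)))).
Proof. unfold orbit_point; simpl. rewrite plus_IZR. f_equal; ring. Qed.

Lemma orbit_above_roof x r :
  in_XRAb N A b (x, r) -> l x <= r ->
  (forall z s, in_XA N A z -> b z <= s < l z -> ~ sim N A l b c (x, r) (z, s)) ->
  forall n, in_XRAb N A b (orbit_point x r n) /\
            sim N A l b c (x, r) (orbit_point x r n) /\
            l (fst (orbit_point x r n)) <= snd (orbit_point x r n).
Proof.
  intros Hxr Hlr Hnone n. induction n as [|n [Hin [Hsim Hroof]]].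
  - unfold orbit_point; simpl. rewrite Rminus_0_r.
    split; [exact Hxr | split; [apply rst_refl | exact Hlr]].
  - rewrite orbit_point_succ. destruct (orbit_point x r n) as [y s]; simpl in *.
    destruct (sim_gen_shift _ _ Hin Hroof) as [Hin' Hstep].
    assert (Hsim' : sim N A l b c (x, r) (Defs.shift y, s - IZR (c y)))
      by (eapply rst_trans; [exact Hsim | apply rst_step; exact Hstep]).
    split; [exact Hin' | split; [exact Hsim' |]].
    destruct (Rle_dec (l (Defs.shift y)) (s - IZR (c y))) as [|Hlt]; auto.
    exfalso. apply (Hnone _ _ (proj1 Hin') (conj (proj2 Hin') (Rnot_le_lt _ _ Hlt))).
    exact Hsim'.
Qed.

End RoofOrbit.

Theorem lemma2p3 (N : nat) (A : nat -> nat -> bool) (l k b : sq -> R) (c : sq -> Z) :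
  (1 < N)%nat -> irreducible N A -> ~ is_perm_matrix N A ->
  suspension_triplet N A l k b c ->
  forall (x : sq) (r : R), in_XRAb N A b (x, r) -> l x <= r ->
  exists (z : sq) (s : R), in_XA N A z /\ b z <= s < l z /\
    sim N A l b c (x, r) (z, s).
Proof.
  intros _ _ _ [_ [_ [_ [Hpos [Hc [Hou [_ Hkb]]]]]]] x r Hxr Hlr.
  apply NNPP; intro Hno.
  assert (Hnone : forall z s, in_XA N A z -> b z <= s < l z ->
                    ~ sim N A l b c (x, r) (z, s))
    by (intros z s Hz Hs Hsim; apply Hno; exists z, s; auto).
  destruct (order_unit_birkhoff_sum_unbounded N A x (proj1 Hxr) c Hou r) as [n Hn].
  destruct (orbit_above_roof N A l k b c Hc Hkb x r Hxr Hlr Hnone n) as [Hin [_ Hroof]].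
  destruct (Hpos _ (proj1 Hin)) as [Hl _].
  unfold orbit_point in *; simpl in *. lra.
Qed.
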